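(* For every word $w\in\mathcal{M}_n^e$, \[ Hw=Q_+Q_-^{-1}w=\sum_{w'\ge w}\ \sum_{T\subseteq E^y_{w'}}(-1)^{|T|}\psi^y_Tw', \] where $w'$ ranges over words of $\mathcal{M}_n^e$ with $w'\ge w$.
   Context: $\mathcal{M}_n^e$ is the set of words in letters $x,y$ with $n_x$ $x$'s and $n_y$ $y$'s ($n=n_x+n_y$, $e=n_y-n_x$), $\mathcal{F}_n^e$ its $\mathbb{Z}$-span. $w_0\le w_1$ iff for each $i$ the $i$-th $x$ of $w_0$ is at a position $\le$ that of the $i$-th $x$ of $w_1$. $\langle w_0|w_1\rangle=1$ if $w_0\le w_1$, else $0$; $w_0\cdot w_1=\delta_{w_0,w_1}$. $H$ is the linear map with $\langle u|v\rangle=\langle v|Hu\rangle$ for all $u,v\in\mathcal{F}_n^e$; $Q_\pm$ are the linear maps with $u\cdot v=\langle u|Q_+v\rangle=\langle Q_-u|v\rangle$. $E^y_w$ is the set of $y$'s in $w$ immediately followed by an $x$; for $T\subseteq E^y_w$, $\psi^y_Tw$ replaces each such $yx$ (with $y\in T$) by $xy$. *)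

From mathcomp Require Import all_boot all_order all_algebra.
Set Implicit Arguments. Unset Strict Implicit. Unset Printing Implicit Defensive.
Import GRing.Theory Num.Theory.
Local Open Scope ring_scope.

(* Letters: false = x, true = y.  A word of M_n^e with n_x = nx, n_y = ny
   (n = nx + ny, e = ny - nx) is a sequence of length nx+ny with nx x's. *)
Definition lx : bool := false.
Definition ly : bool := true.

Definition word (nx ny : nat) :=
  {t : (nx + ny).-tuple bool | count (fun b => b == lx) t == nx}.

Definition xpos (s : seq bool) : seq nat :=
  [seq i <- iota 0 (size s) | nth ly s i == lx].

Definition wle nx ny (w0 w1 : word nx ny) : bool :=
  all2 (fun a b => (a <= b)%N) (xpos (val w0)) (xpos (val w1)).

(* Z-span F_n^e : integer vectors indexed by words; a word w is delta w *)
Definition vec nx ny := word nx ny -> int.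
Definition delta nx ny (w : word nx ny) : vec nx ny := fun u => (u == w)%:Z.

Definition braket nx ny (u v : vec nx ny) : int :=
  \sum_(a : word nx ny) \sum_(b : word nx ny) u a * v b * (wle a b)%:Z.

Definition dot nx ny (u v : vec nx ny) : int := \sum_(a : word nx ny) u a * v a.

(* linear maps F -> F, given by their matrices *)
Definition mat nx ny := word nx ny -> word nx ny -> int.
Definition app nx ny (M : mat nx ny) (v : vec nx ny) : vec nx ny :=
  fun a => \sum_(b : word nx ny) M a b * v b.

Definition Ey nx ny (w : word nx ny) : {set 'I_(nx + ny)} :=
  [set i : 'I_(nx + ny) | (nth lx (val w) i == ly) && (nth ly (val w) i.+1 == lx)].

(* psi^y_T s : replace each yx whose y is at a position of T by xy *)
Definition psi n (T : {set 'I_n}) (s : seq bool) : seq bool :=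
  let inT j := [exists i in T, nat_of_ord i == j] in
  mkseq (fun j => if inT j then lx
                  else if (0 < j)%N && inT j.-1 then ly
                  else nth lx s j) (size s).

Definition rhs nx ny (w : word nx ny) : vec nx ny :=
  fun u => \sum_(w' : word nx ny | wle w w')
             \sum_(T : {set 'I_(nx + ny)} | T \subset Ey w')
               (-1) ^+ #|T| * ((val u : seq bool) == psi T (val w'))%:Z.

From mathcomp Require Import all_boot all_algebra zify.
Set Implicit Arguments. Unset Strict Implicit. Unset Printing Implicit Defensive.
Import GRing.Theory.

(* Writing <u|v> = u^T L v with L the matrix of <=, the hypotheses say
   L = H^T L^T, L Q+ = 1 and Q-^T L = 1; hence Q+ = Q-^T = L^-1, Q-^-1 = L^T
   and H = Q+ Q-^-1.  The expansion of Q+ Q-^-1 w is then equivalent to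
   L rhs(w) = L^T w, i.e. to
     sum_(w' >= w) sum_(T <= E^y_w') (-1)^|T| [u <= psi_T w'] = [w <= u].
   Flipping the descents of T moves some x's of w' one step left, so
   u <= psi_T w' iff u <= w' and every descent of T is "movable" (its x stays
   at or after the matching x of u).  The inner alternating sum therefore
   vanishes unless u <= w' and no descent of w' is movable, which forces
   u = w'. *)

Lemma mem_xpos s i : (i \in xpos s) = (i < size s) && (nth ly s i == lx).
Proof. by rewrite /xpos mem_filter mem_iota add0n andbC. Qed.

Lemma sorted_xpos s : sorted ltn (xpos s).
Proof. apply: sorted_filter; [exact: ltn_trans | exact: iota_ltn_sorted]. Qed.

Lemma uniq_xpos s : uniq (xpos s).
Proof. exact: (sorted_uniq ltn_trans ltnn (sorted_xpos s)). Qed.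

Lemma ltn_nth_xpos s i j : i < j < size (xpos s) ->
  nth 0 (xpos s) i < nth 0 (xpos s) j.
Proof.
move=> /andP[ij js]; have i_lt : i < size (xpos s) := ltn_trans ij js.
exact: (sorted_ltn_nth ltn_trans 0 (sorted_xpos s)).
Qed.

Lemma nth_xpos_inj s i j : i < size (xpos s) -> j < size (xpos s) ->
  nth 0 (xpos s) i = nth 0 (xpos s) j -> i = j.
Proof. by move=> ? ? /eqP; rewrite nth_uniq ?uniq_xpos // => /eqP. Qed.

Lemma size_xpos s : size (xpos s) = count (pred1 lx) s.
Proof. by rewrite /xpos size_filter -{3}(mkseq_nth ly s) /mkseq count_map. Qed.

Lemma xpos_inj s1 s2 : size s1 = size s2 -> xpos s1 = xpos s2 -> s1 = s2.
Proof.
move=> size12 xpos12; apply: (@eq_from_nth _ ly) => // i i_lt.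
have := mem_xpos s1 i; rewrite xpos12 mem_xpos -size12 i_lt /= /lx.
by case: (nth ly s1 i); case: (nth ly s2 i).
Qed.

Lemma all2_nth_forall (r : rel nat) m (s t : seq nat) :
  size s = m -> size t = m ->
  all2 r s t = [forall k : 'I_m, r (nth 0 s k) (nth 0 t k)].
Proof.
elim: s t m => [|x s IH] [|y t] [|m] //=.
  by move=> _ _; apply/esym/forallP => -[].
move=> [size_s] [size_t]; rewrite (IH t m size_s size_t).
apply/andP/forallP => [[rxy /forallP rst] [[|k] k_lt] //= | r_nth].
  exact: (rst (Ordinal (k_lt : k < m))).
split; first exact: (r_nth ord0).
by apply/forallP => k; exact: (r_nth (lift ord0 k)).
Qed.

Definition pos_in n (T : {set 'I_n}) j := [exists i in T, nat_of_ord i == j].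

Definition yx_at (s : seq bool) j :=
  (nth lx s j == ly) && (nth ly s j.+1 == lx).

Definition psi_shift n (T : {set 'I_n}) p :=
  if (0 < p) && pos_in T p.-1 then p.-1 else p.

Section Psi.
Variables (n : nat) (T : {set 'I_n}) (s : seq bool).

Lemma size_psi : size (psi T s) = size s.
Proof. by rewrite size_mkseq. Qed.

Lemma nth_psi j : j < size s ->
  nth ly (psi T s) j = if pos_in T j then lx
                       else if (0 < j) && pos_in T j.-1 then ly
                       else nth lx s j.
Proof. by move=> j_lt; rewrite /psi nth_mkseq. Qed.

Hypothesis T_yx : forall j, pos_in T j -> yx_at s j.

Lemma psi_shift_homo : {in xpos s &, {homo psi_shift T : p q / p < q}}.
Proof.
move=> p q; rewrite !mem_xpos => /andP[_ s_p] /andP[q_lt _] pq.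
rewrite /psi_shift; case: ifP => [/andP[p_gt0 _] | _].
  by case: ifP => [/andP[q_gt0 _] |]; lia.
case: ifP => [/andP[q_gt0 Tq] | _] //.
(* [q] moves to [q - 1], which holds a [y], so [p < q - 1] *)
have /andP[/eqP s_q1 _] := T_yx Tq.
have : p != q.-1.
  by apply: contraTneq s_p => ->; rewrite (set_nth_default lx) ?s_q1 //; lia.
lia.
Qed.

Lemma mem_xpos_psi j :
  (j \in xpos (psi T s)) = (j \in map (psi_shift T) (xpos s)).
Proof.
rewrite mem_xpos size_psi; apply/idP/mapP => [/andP[j_lt] | [p]].
  rewrite nth_psi //; case: ifP => Tj.
    move=> _; have /andP[_ /eqP s_j1] := T_yx Tj.
    exists j.+1; last by rewrite /psi_shift /= Tj.
    rewrite mem_xpos s_j1 eqxx andbT.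
    by case: ltnP => // size_le; move: s_j1; rewrite nth_default.
  case: ifP => Tj1 // s_j; exists j; last by rewrite /psi_shift Tj1.
  by rewrite mem_xpos j_lt (set_nth_default lx).
rewrite mem_xpos => /andP[p_lt s_p] ->; rewrite /psi_shift.
case: ifP => [/andP[p_gt0 Tp1] | Tp1].
  have p1_lt : p.-1 < size s := leq_ltn_trans (leq_pred p) p_lt.
  by rewrite p1_lt nth_psi ?Tp1.
rewrite p_lt nth_psi // Tp1.
by case: ifP => Tp //; rewrite (set_nth_default ly).
Qed.

Lemma xpos_psi : xpos (psi T s) = map (psi_shift T) (xpos s).
Proof.
apply: (irr_sorted_eq ltn_trans ltnn); first exact: sorted_xpos.
  exact: homo_sorted_in psi_shift_homo (allss _) (sorted_xpos s).
exact: mem_xpos_psi.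
Qed.

Lemma count_psi : count (pred1 lx) (psi T s) = count (pred1 lx) s.
Proof. by rewrite -!size_xpos xpos_psi size_map. Qed.

End Psi.

Local Notation xs w := (xpos (val w)).

Section Words.
Variables nx ny : nat.
Local Notation W := (word nx ny).

Lemma size_word (w : W) : size (val w : seq bool) = nx + ny.
Proof. exact: size_tuple. Qed.

Lemma size_xpos_word (w : W) : size (xs w) = nx.
Proof. by rewrite size_xpos; apply/eqP; exact: (valP w). Qed.

Lemma word_val_inj (u w : W) : val u = val w :> seq bool -> u = w.
Proof. by move=> /val_inj /val_inj. Qed.

Lemma Ey_yx_at (w : W) (T : {set 'I_(nx + ny)}) :
  T \subset Ey w -> forall j, pos_in T j -> yx_at (val w) j.
Proof.
move=> /subsetP TE j /existsP[i /andP[iT /eqP <-]].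
by have := TE i iT; rewrite inE.
Qed.

Lemma psi_word (w : W) (T : {set 'I_(nx + ny)}) :
  T \subset Ey w -> exists c : W, val c = psi T (val w) :> seq bool.
Proof.
move=> TE; have size_c : size (psi T (val w)) == nx + ny.
  by rewrite size_psi size_word.
have count_c : count (pred1 lx) (Tuple size_c) == nx.
  by rewrite /= count_psi; [exact: (valP w) | exact: Ey_yx_at].
by exists (exist _ (Tuple size_c) count_c).
Qed.

Lemma wle_nth (u w : W) :
  wle u w = [forall k : 'I_nx, nth 0 (xs u) k <= nth 0 (xs w) k].
Proof. exact: all2_nth_forall (size_xpos_word u) (size_xpos_word w). Qed.

Lemma wle_refl (w : W) : wle w w.
Proof. by rewrite wle_nth; apply/forallP. Qed.

Definition movable (u w : W) : {set 'I_(nx + ny)} :=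
  [set i : 'I_(nx + ny) |
     [forall k : 'I_nx, (nth 0 (xs w) k == i.+1) ==> (nth 0 (xs u) k <= i)]].

Lemma le_xpos_psi (u w : W) (T : {set 'I_(nx + ny)}) : T \subset Ey w ->
  all2 leq (xs u) (xpos (psi T (val w))) = wle u w && (T \subset movable u w).
Proof.
move=> TE; rewrite wle_nth xpos_psi; last exact: Ey_yx_at.
rewrite (all2_nth_forall _ (size_xpos_word u)) ?size_map ?size_xpos_word //.
have nth_shift k : k < nx ->
    nth 0 [seq psi_shift T i | i <- xs w] k = psi_shift T (nth 0 (xs w) k).
  by move=> k_lt; rewrite (nth_map 0) ?size_xpos_word.
apply/forallP/andP => [le_psi | [/forallP le_uw /subsetP Tmov] k].
  split.
    apply/forallP => k; apply: leq_trans (le_psi k) _.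
    by rewrite nth_shift // /psi_shift; case: ifP => // _; exact: leq_pred.
  apply/subsetP => i iT; rewrite inE; apply/forallP => k.
  apply/implyP => /eqP w_k; have := le_psi k.
  rewrite nth_shift // w_k /psi_shift /=.
  suff -> : pos_in T i by [].
  by apply/existsP; exists i; rewrite iT eqxx.
rewrite nth_shift // /psi_shift.
case: ifP => [/andP[w_k_gt0 /existsP[i /andP[iT /eqP i_w_k]]] | _].
  have := Tmov i iT; rewrite inE => /forallP /(_ k) /implyP.
  by rewrite i_w_k prednK //; apply.
exact: le_uw.
Qed.

Lemma Ey_movable_self (w : W) : Ey w :&: movable w w = set0.
Proof.
apply/setP => i; rewrite !inE; apply/negbTE/andP.
move=> -[/andP[_ w_i1] /forallP mov].
have i1_w : i.+1 \in xs w.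
  rewrite mem_xpos w_i1 andbT; case: ltnP => // size_le.
  by move: w_i1; rewrite nth_default.
have k_lt : index i.+1 (xs w) < nx by rewrite -index_mem size_xpos_word in i1_w.
by have := mov (Ordinal k_lt); rewrite /= nth_index // eqxx ltnn.
Qed.

Lemma unmovable_blocked (u w : W) k (i : 'I_(nx + ny)) :
  i \in Ey w :\: movable u w -> k < nx -> nth 0 (xs w) k = i.+1 ->
  i < nth 0 (xs u) k.
Proof.
rewrite !inE => /andP[/forallPn[k']]; rewrite negb_imply -ltnNge.
move=> /andP[/eqP w_k' lt_u_k'] _ k_lt w_k.
by rewrite (@nth_xpos_inj (val w) k k') ?size_xpos_word // w_k w_k'.
Qed.

Lemma wle_unmovable_eq (u w : W) :
  wle u w -> Ey w :&: movable u w = set0 -> u = w.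
Proof.
rewrite wle_nth => /forallP le_uw Ey_mov.
have blocked k (i : 'I_(nx + ny)) : i \in Ey w -> k < nx ->
    nth 0 (xs w) k = i.+1 -> i < nth 0 (xs u) k.
  move=> iE; apply: unmovable_blocked; rewrite inE iE andbT.
  by apply: contraFN (in_set0 i) => i_mov; rewrite -Ey_mov inE iE.
(* The [k]-th [x] of [w], at [q + 1], follows either a [y], whose descent is
   blocked, or the [j]-th [x] for some [j < k], so [u_k > u_j = q]. *)
have eq_nth k : k < nx -> nth 0 (xs u) k = nth 0 (xs w) k.
  elim/ltn_ind: k => k IH k_lt; apply/eqP.
  rewrite eqn_leq (le_uw (Ordinal k_lt)) /=.
  case w_k: (nth 0 (xs w) k) => [//|q].
  have : q.+1 \in xs w by rewrite -w_k mem_nth // size_xpos_word.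
  rewrite mem_xpos => /andP[q1_lt w_q1].
  have q_lt : q < nx + ny by rewrite -(size_word w) ltnW.
  case w_q: (nth lx (val w) q).
    by apply: (blocked k (Ordinal q_lt)); rewrite // inE /yx_at /= w_q w_q1.
  have : q \in xs w.
    by rewrite mem_xpos (ltnW q1_lt) (set_nth_default lx) ?w_q // ltnW.
  rewrite -index_mem size_xpos_word; set j := index q (xs w) => j_lt.
  have w_j : nth 0 (xs w) j = q.
    by rewrite nth_index // -index_mem size_xpos_word.
  have j_lt_k : j < k.
    case: (ltngtP j k) => // [k_lt_j | jk]; last first.
      by move: w_k; rewrite -jk w_j => /n_Sn.
    have := @ltn_nth_xpos (val w) k j; rewrite k_lt_j size_xpos_word j_lt.
    by rewrite w_k w_j ltnNge leqnSn => /(_ isT).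
  have := @ltn_nth_xpos (val u) j k.
  by rewrite j_lt_k size_xpos_word k_lt IH // w_j; apply.
apply/word_val_inj/xpos_inj; first by rewrite !size_word.
apply: (@eq_from_nth _ 0); first by rewrite !size_xpos_word.
by move=> k; rewrite size_xpos_word; exact: eq_nth.
Qed.

End Words.

Local Open Scope ring_scope.

Lemma sum_subset_sign (R : comPzRingType) (I : finType) (X : {set I}) :
  \sum_(T : {set I} | T \subset X) (-1) ^+ #|T| = (X == set0)%:R :> R.
Proof.
pose F i : R := if i \in X then -1 else 0.
have prod_F : \prod_i (F i + 1) = (X == set0)%:R.
  have [X0 | [x xX]] := set_0Vmem X.
    by rewrite X0 eqxx big1 // => i _; rewrite /F X0 inE add0r.
  have /negbTE -> : X != set0 by apply/set0Pn; exists x.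
  by rewrite (bigD1 x) //= /F xX addNr mul0r.
rewrite -prod_F (bigA_distr _ _ F (fun=> 1)) big_mkcond /=.
apply: eq_bigr => T _; rewrite -big_mkcond /=.
case: ifP => [/subsetP TX | /negbT /subsetPn[i iT iX]].
  by rewrite (eq_bigr (fun=> -1)) ?prodr_const // => i /TX; rewrite /F => ->.
by rewrite (bigD1 i) //= /F (negbTE iX) mul0r.
Qed.

Definition lemat {nx ny} : mat nx ny := fun u w => (wle u w)%:Z.

Section Expansion.
Variables nx ny : nat.
Local Notation W := (word nx ny).

Lemma sum_psi_sign (u w : W) :
  \sum_(T : {set 'I_(nx + ny)} | T \subset Ey w)
     (-1) ^+ #|T| * (all2 leq (xs u) (xpos (psi T (val w))))%:Z = (u == w)%:Z.
Proof.
have unmovable : wle u w && (Ey w :&: movable u w == set0) = (u == w).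
  apply/idP/eqP => [/andP[le_uw /eqP] | ->]; first exact: wle_unmovable_eq.
  by rewrite wle_refl Ey_movable_self eqxx.
under eq_bigr => T TE do rewrite le_xpos_psi // -mulnb PoszM mulrCA.
rewrite -big_distrr /= -unmovable -mulnb PoszM -[(_ == set0)%:Z]natz.
rewrite -sum_subset_sign (eq_bigl _ _ (fun T => subsetI _ _ _)) big_mkcondr /=.
congr (_ * _); apply: eq_bigr => T _.
by case: (T \subset _); rewrite ?mulr1 ?mulr0.
Qed.

Lemma sum_lemat_psi (u w : W) (T : {set 'I_(nx + ny)}) : T \subset Ey w ->
  \sum_(c : W) lemat u c * (val c == psi T (val w) :> seq bool)%:Z =
  (all2 leq (xs u) (xpos (psi T (val w))))%:Z.
Proof.
move=> /psi_word[c <-]; rewrite (bigD1 c) //= eqxx mulr1 big1 ?addr0 //.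
move=> c' c'c.
suff /negbTE -> : val c' != val c :> seq bool by rewrite mulr0.
by apply: contra c'c => /eqP /word_val_inj ->.
Qed.

Lemma lemat_rhs (w : W) : app lemat (rhs w) =1 lemat w.
Proof.
move=> u; rewrite /app /rhs.
under eq_bigr do rewrite mulr_sumr; rewrite exchange_big /=.
transitivity (\sum_(w' | wle w w') (u == w')%:Z).
  apply: eq_bigr => w' _; rewrite -sum_psi_sign.
  under eq_bigr do rewrite mulr_sumr; rewrite exchange_big /=.
  apply: eq_bigr => T TE; rewrite -(sum_lemat_psi u TE) mulr_sumr.
  by apply: eq_bigr => c _; rewrite mulrCA.
rewrite big_mkcond (bigD1 u) //= eqxx big1 ?addr0 => [|w' w'u].
  by rewrite /lemat; case: ifP.
by rewrite eq_sym (negbTE w'u); case: ifP.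
Qed.

End Expansion.

Lemma bilinear_mx_inj (R : pzRingType) n (A B : 'M[R]_n) :
  (forall u v : 'cV[R]_n, u^T *m A *m v = u^T *m B *m v) -> A = B.
Proof.
move=> AB; apply/matrixP => i j; have := AB (delta_mx i 0) (delta_mx j 0).
by rewrite trmx_delta -!rowE -!colE => /matrixP /(_ 0 0); rewrite !mxE.
Qed.

Section WordMatrices.
Variables nx ny : nat.
Local Notation W := (word nx ny).
Local Notation N := #|{: W}|.

Definition mxw (M : mat nx ny) : 'M[int]_N :=
  \matrix_(i, j) M (enum_val i) (enum_val j).
Definition colw (v : vec nx ny) : 'cV[int]_N := \col_i v (enum_val i).
Definition vecw (c : 'cV[int]_N) : vec nx ny := fun a => c (enum_rank a) 0.

Lemma sum_word (F : W -> int) : \sum_(a : W) F a = \sum_(i < N) F (enum_val i).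
Proof. by rewrite -big_enum_val. Qed.

Lemma vecwK c : colw (vecw c) = c.
Proof. by apply/matrixP => i j; rewrite !mxE /vecw enum_valK ord1. Qed.

Lemma colw_inj u v : colw u = colw v -> u =1 v.
Proof.
by move=> /matrixP uv a; have := uv (enum_rank a) 0; rewrite !mxE enum_rankK.
Qed.

Lemma eq_colw u v : u =1 v -> colw u = colw v.
Proof. by move=> uv; apply/matrixP => i j; rewrite !mxE uv. Qed.

Lemma colw_app M v : colw (app M v) = mxw M *m colw v.
Proof.
apply/matrixP => i j; rewrite !mxE /app sum_word.
by apply: eq_bigr => k _; rewrite !mxE.
Qed.

Lemma app_delta (M : mat nx ny) a : app M (delta a) =1 M^~ a.
Proof.
move=> b; rewrite /app (bigD1 a) //= /delta eqxx mulr1 big1 ?addr0 //.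
by move=> c /negbTE ->; rewrite mulr0.
Qed.

Lemma dot_mx u v : (dot u v)%:M = (colw u)^T *m colw v.
Proof.
apply/matrixP => i j; rewrite !ord1 !mxE /dot sum_word mulr1n.
by apply: eq_bigr => k _; rewrite !mxE.
Qed.

Lemma braket_mx u v : (braket u v)%:M = (colw u)^T *m mxw lemat *m colw v.
Proof.
rewrite -mulmxA -colw_app -dot_mx /braket /dot; congr (_%:M).
apply: eq_bigr => a _; rewrite /app mulr_sumr.
by apply: eq_bigr => b _; rewrite mulrAC mulrA.
Qed.

Lemma braket_adjoint_mx (M : mat nx ny) :
  (forall u v, braket u v = braket v (app M u)) ->
  mxw lemat = (mxw M)^T *m (mxw lemat)^T.
Proof.
move=> adj; apply: bilinear_mx_inj => u v.
rewrite -(vecwK u) -(vecwK v) -braket_mx adj -tr_scalar_mx braket_mx colw_app.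
by rewrite !trmx_mul trmxK !mulmxA.
Qed.

Lemma dot_braket_right_inverse (M : mat nx ny) :
  (forall u v, dot u v = braket u (app M v)) -> mxw lemat *m mxw M = 1%:M.
Proof.
move=> dotE; apply: bilinear_mx_inj => u v.
by rewrite -(vecwK u) -(vecwK v) mulmx1 -dot_mx dotE braket_mx colw_app !mulmxA.
Qed.

Lemma dot_braket_left_inverse (M : mat nx ny) :
  (forall u v, dot u v = braket (app M u) v) -> (mxw M)^T *m mxw lemat = 1%:M.
Proof.
move=> dotE; apply: bilinear_mx_inj => u v.
rewrite -(vecwK u) -(vecwK v) mulmx1 -dot_mx dotE braket_mx colw_app.
by rewrite trmx_mul !mulmxA.
Qed.

End WordMatrices.

Unset Implicit Arguments.

Theorem mainTheorem6 (nx ny : nat) (H Qp Qm : mat nx ny) :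
  (forall u v : vec nx ny, braket u v = braket v (app H u)) ->
  (forall u v : vec nx ny, dot u v = braket u (app Qp v)) ->
  (forall u v : vec nx ny, dot u v = braket (app Qm u) v) ->
  exists Qmi : mat nx ny,
    (forall v, app Qm (app Qmi v) =1 v) /\
    (forall v, app Qmi (app Qm v) =1 v) /\
    (forall w : word nx ny,
       app H (delta w) =1 app Qp (app Qmi (delta w)) /\
       app Qp (app Qmi (delta w)) =1 rhs w).
Proof.
move=> /braket_adjoint_mx HL /dot_braket_right_inverse LQp.
move=> /dot_braket_left_inverse QmL; set L := mxw _ in HL LQp QmL.
have QpL : mxw Qp *m L = 1%:M := mulmx1C LQp.
have Qp_trQm : mxw Qp = (mxw Qm)^T.
  by rewrite -[LHS]mul1mx -QmL -mulmxA LQp mulmx1.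
have H_QpLt : mxw H = mxw Qp *m L^T.
  by rewrite [in RHS]HL trmx_mul !trmxK mulmxA QpL mul1mx.
pose Qmi : mat nx ny := fun a b => lemat b a.
have Qmi_Lt : mxw Qmi = L^T by apply/matrixP => i j; rewrite !mxE.
exists Qmi; split; [|split].
- move=> v; apply: colw_inj; rewrite !colw_app Qmi_Lt mulmxA.
  by rewrite -[mxw Qm]trmxK -Qp_trQm -trmx_mul LQp trmx1 mul1mx.
- move=> v; apply: colw_inj; rewrite !colw_app Qmi_Lt mulmxA.
  by rewrite -[mxw Qm]trmxK -trmx_mul QmL trmx1 mul1mx.
move=> w; split; apply: colw_inj; rewrite !colw_app.
  by rewrite H_QpLt Qmi_Lt mulmxA.
rewrite -colw_app (eq_colw (app_delta _ w)) -(eq_colw (lemat_rhs w)).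
by rewrite colw_app mulmxA QpL mul1mx.
Qed.
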